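(* Let $\alpha\in(0,1/2]$. Then for all integers $n\ge1$ and $a,b\ge0$, $$\sum_{0\le l\le n}\binom nl\alpha^l(1-\alpha)^{n-l}\,\mathbf 1_{\gcd(l+a,n+b)=1}=\sum_{d\mid n+b}\frac{\mu(d)}{d}+O\Big(\frac{\tau(n+b)}{\sqrt n}\Big),$$ where the implied constant depends only on $\alpha$.
   Context: $\mu$ is the Möbius function, $\tau(m)$ the number of positive divisors of $m$, and $\mathbf 1_A$ the indicator of the condition $A$. *)

From mathcomp Require Import all_boot all_order all_algebra.
From mathcomp Require Import reals.
Set Implicit Arguments. Unset Strict Implicit. Unset Printing Implicit Defensive.
Import Order.TTheory GRing.Theory Num.Theory.

(* Möbius function: mu 0 = 0 (convention, unused); for n >= 1,
   mu n = (-1)^(number of prime factors) if n is squarefree, else 0. *)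
Definition squarefree (n : nat) : bool :=
  all (fun p => logn p n <= 1) (primes n).

Definition moebius (n : nat) : int :=
  if n == 0 then 0%R
  else if squarefree n then ((-1) ^+ size (primes n))%R else 0%R.

Definition tau (m : nat) : nat := size (divisors m).

(* Möbius inversion writes 1_{gcd(l+a, N) = 1} as a sum over d | N of
   mu(d) 1_{d | l+a}, so it suffices to show that the binomial mass of each
   residue class {l : d | l + a} is 1/d up to an error independent of d.
   Shifting the class by one changes its mass by at most the total variation
   of the binomial distribution, and the d shifts average to exactly 1/d.  The
   distribution is unimodal, so its total variation is twice the mode, and
   the ratio of consecutive probabilities shows that the mode is spread over
   about sqrt(n alpha (1 - alpha)) neighbouring values of at least half its
   size, whence mode = O(1 / sqrt n). *)

From mathcomp Require Import all_boot all_order all_algebra.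
From mathcomp Require Import reals.
From mathcomp Require Import ring lra.
Set Implicit Arguments. Unset Strict Implicit. Unset Printing Implicit Defensive.
Import Order.TTheory GRing.Theory Num.Theory.
Local Open Scope ring_scope.

Lemma squarefree_mul_prime p e : prime p -> (0 < e)%N -> ~~ (p %| e)%N ->
  squarefree (p * e) = squarefree e.
Proof.
move=> pp e0 npe; have p0 := prime_gt0 pp.
rewrite /squarefree.
have -> : all (fun q => logn q (p * e) <= 1)%N (primes (p * e)) =
          all (fun q => logn q (p * e) <= 1)%N (p :: primes e).
  by apply: eq_all_r => q; rewrite primesM // primes_prime // inE.
rewrite /= lognM // logn_prime // eqxx logn_coprime ?prime_coprime //=.
apply: eq_in_all => q; rewrite mem_primes => /and3P[qp _ qe].
rewrite lognM // logn_prime //.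
by case: eqP => // eqp; rewrite -eqp qe in npe.
Qed.

Lemma moebius_mul_prime p e : prime p -> (0 < e)%N -> ~~ (p %| e)%N ->
  moebius (p * e) = - moebius e.
Proof.
move=> pp e0 npe; have p0 := prime_gt0 pp.
rewrite /moebius muln_eq0 (negbTE (lt0n_neq0 p0)) (negbTE (lt0n_neq0 e0)) /=.
rewrite squarefree_mul_prime //; case: squarefree; last by rewrite oppr0.
have -> : size (primes (p * e)) = (size (primes e)).+1.
  rewrite -[RHS]/(size (p :: primes e)); apply: perm_size.
  apply: uniq_perm; first exact: primes_uniq.
    by rewrite /= primes_uniq mem_primes pp e0 npe.
  by move=> q; rewrite primesM // primes_prime // inE.
by rewrite exprS mulN1r.
Qed.

Lemma moebius_mul_prime_dvd p e : prime p -> (p %| e)%N -> moebius (p * e) = 0.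
Proof.
move=> pp pe; have [->|e0] := posnP e; first by rewrite muln0.
have p0 := prime_gt0 pp.
rewrite /moebius muln_eq0 (negbTE (lt0n_neq0 p0)) (negbTE (lt0n_neq0 e0)) /=.
suff -> : squarefree (p * e) = false by [].
apply/negbTE/negP => /allP /(_ p).
rewrite mem_primes pp muln_gt0 p0 e0 dvdn_mulr // => /(_ isT).
rewrite lognM // logn_prime // eqxx.
have : (0 < logn p e)%N by rewrite logn_gt0 mem_primes pp e0 pe.
by case: (logn p e).
Qed.

Lemma moebius_norm_le1 (R : numDomainType) d : `|(moebius d)%:~R : R| <= 1.
Proof.
rewrite /moebius; case: (d == 0%N); first by rewrite normr0 ler01.
case: squarefree; last by rewrite normr0 ler01.
by rewrite rmorphXn /= rmorphN1 normrX normrN1 expr1n.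
Qed.

Section DivisorsSplit.

Variables (p g : nat).
Hypotheses (pp : prime p) (pg : (p %| g)%N) (g0 : (0 < g)%N).

Let gp0 : (0 < g %/ p)%N.
Proof. by rewrite divn_gt0 ?prime_gt0 // dvdn_leq. Qed.

Lemma perm_divisors_dvd :
  perm_eq [seq d <- divisors g | (p %| d)%N] (map (muln p) (divisors (g %/ p))).
Proof.
have p0 := prime_gt0 pp.
have injp : injective (muln p).
  by move=> x y /eqP; rewrite eqn_pmul2l // => /eqP.
apply: uniq_perm.
- by rewrite filter_uniq // divisors_uniq.
- by rewrite map_inj_uniq // divisors_uniq.
move=> d; rewrite mem_filter; case: (boolP (p %| d)%N) => /= pd.
  have [k ->] := dvdnP pd; have [h gh] := dvdnP pg.
  rewrite [(k * p)%N]mulnC mem_map // -!dvdn_divisors // gh mulnK //.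
  by rewrite [(h * p)%N]mulnC dvdn_pmul2l //.
by apply/esym/negP => /mapP [e _ de]; rewrite de dvdn_mulr in pd.
Qed.

Lemma perm_divisors_ndvd :
  perm_eq [seq d <- divisors g | ~~ (p %| d)%N]
          [seq e <- divisors (g %/ p) | ~~ (p %| e)%N].
Proof.
apply: uniq_perm; try by rewrite filter_uniq // divisors_uniq.
move=> d; rewrite !mem_filter; case: (boolP (p %| d)%N) => //= pd.
have [h gh] := dvdnP pg.
rewrite -!dvdn_divisors // gh mulnK ?prime_gt0 // Gauss_dvdl //.
by rewrite coprime_sym prime_coprime.
Qed.

End DivisorsSplit.

Lemma sum_moebius_divisors g : (0 < g)%N ->
  \sum_(d <- divisors g) moebius d = (g == 1)%:R.
Proof.
move=> g0; have [|g1|->] := ltngtP g 1; last by rewrite big_seq1.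
  by rewrite ltnS leqn0 => /eqP g00; rewrite g00 in g0.
have pp := pdiv_prime g1; set p := pdiv g in pp *.
have pg : (p %| g)%N := pdiv_dvd g.
have gp0 : (0 < g %/ p)%N by rewrite divn_gt0 ?prime_gt0 // dvdn_leq.
rewrite (bigID (fun d => p %| d)%N) /=.
rewrite -[\sum_(d <- _ | (p %| d)%N) _]big_filter -[\sum_(d <- _ | ~~ _) _]big_filter.
rewrite (perm_big _ (perm_divisors_dvd pp pg g0)) big_map.
rewrite (perm_big _ (perm_divisors_ndvd pp pg g0)) big_filter.
rewrite (bigID (fun d => p %| d)%N) /= big1; last first.
  by move=> e pe; apply: moebius_mul_prime_dvd.
rewrite add0r -big_split /= big_seq_cond big1 //.
move=> e /andP[]; rewrite -dvdn_divisors // => /(dvdn_gt0 gp0) e0 pe.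
by rewrite moebius_mul_prime // addNr.
Qed.

Lemma coprime_moebius (R : pzRingType) x N : (0 < N)%N ->
  (coprime x N)%:R = \sum_(d <- divisors N) (moebius d)%:~R * (d %| x)%:R :> R.
Proof.
move=> N0; have G0 : (0 < gcdn x N)%N by rewrite gcdn_gt0 N0 orbT.
rewrite (eq_bigr (fun d => if (d %| x)%N then (moebius d)%:~R else 0)); last first.
  by move=> d _; case: (d %| x)%N; rewrite ?mulr1 ?mulr0.
rewrite -big_mkcond -big_filter (perm_big (divisors (gcdn x N))); last first.
  apply: uniq_perm; rewrite ?filter_uniq ?divisors_uniq //.
  by move=> d; rewrite mem_filter -!dvdn_divisors // dvdn_gcd.
by rewrite -rmorph_sum /= sum_moebius_divisors // /coprime; case: eqP.
Qed.

Lemma sum_dvdn_window (R : pzSemiRingType) d y : (0 < d)%N ->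
  \sum_(0 <= i < d) (d %| y + i)%:R = 1 :> R.
Proof.
move=> d0; elim: y => [|y IH].
  case: d d0 => // d _; rewrite big_nat_recl //= big1_seq ?addr0 //.
  move=> i /andP[_]; rewrite mem_index_iota => /andP[_ id].
  case: (boolP (d.+1 %| 0 + i.+1)%N) => // /dvdn_leq; rewrite add0n => /(_ isT).
  by rewrite leqNgt ltnS id.
rewrite -[RHS]IH (eq_bigr (fun i => (d %| y + i.+1)%:R)); last first.
  by move=> i _; rewrite addSnnS.
case: d d0 {IH} => // d _.
rewrite big_nat_recr // [RHS]big_nat_recl //= addn0 dvdn_addl //.
by rewrite addrC.
Qed.

Lemma sum_dvdn_window_le1 (R : numDomainType) d y j : (0 < d)%N -> (j <= d)%N ->
  \sum_(0 <= i < j) (d %| y + i)%:R <= 1 :> R.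
Proof.
move=> d0 jd; rewrite -[X in _ <= X](sum_dvdn_window R y d0).
by rewrite (big_cat_nat (leq0n j) jd) /= lerDl sumr_ge0.
Qed.

Lemma natrB_le (R : numDomainType) (n x : nat) : n%:R - x%:R <= (n - x)%:R :> R.
Proof.
have [h|h] := leqP x n; first by rewrite natrB.
rewrite (_ : (n - x)%N = 0%N); last by apply/eqP; rewrite subn_eq0 ltnW.
by rewrite subr_le0 ler_nat ltnW.
Qed.

Section BinomialDistribution.

Variables (R : realType) (a : R).

Definition binp n l := 'C(n, l)%:R * a ^+ l * (1 - a) ^+ (n - l).

Lemma binp_ge0 n l : 0 <= a <= 1 -> 0 <= binp n l.
Proof. by move=> /andP[a0 a1]; rewrite !mulr_ge0 // exprn_ge0 // subr_ge0. Qed.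

Lemma binp_small n l : (n < l)%N -> binp n l = 0.
Proof. by move=> h; rewrite /binp bin_small // !mul0r. Qed.

Lemma sum_binp n : \sum_(l < n.+1) binp n l = 1.
Proof.
have := exprDn (1 - a) a n; rewrite subrK expr1n => ->.
by apply: eq_bigr => i _; rewrite /binp -mulr_natl; ring.
Qed.

Lemma sum_binp_prefix_le1 n M : 0 <= a <= 1 -> \sum_(0 <= l < M) binp n l <= 1.
Proof.
move=> a01.
have total : \sum_(0 <= l < M + n.+1) binp n l = 1.
  rewrite (big_cat_nat (leq0n n.+1)) ?leq_addl //= [X in _ + X]big1_seq ?addr0.
    by rewrite big_mkord sum_binp.
  by move=> l /andP[_]; rewrite mem_index_iota => /andP[nl _]; apply: binp_small.
rewrite -[X in _ <= X]total (big_cat_nat (leq0n M) (leq_addr _ _)) /=.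
by rewrite lerDl sumr_ge0 // => i _; apply: binp_ge0.
Qed.

Lemma sum_binp_window_le1 n k m : 0 <= a <= 1 ->
  \sum_(0 <= i < m) binp n (k + i) <= 1.
Proof.
move=> a01; have := big_addn 0 (m + k) k xpredT (binp n).
rewrite add0n addnK => E; under eq_bigr do rewrite addnC; rewrite -E.
apply: le_trans (sum_binp_prefix_le1 n (m + k) a01).
rewrite [X in _ <= X](big_cat_nat (leq0n k) (leq_addl _ _)) /= lerDr.
by rewrite sumr_ge0 // => i _; apply: binp_ge0.
Qed.

Lemma binp_ratio n m :
  binp n m.+1 * m.+1%:R * (1 - a) = binp n m * (n - m)%:R * a.
Proof.
rewrite /binp; have [mn|nm] := ltnP m n; last first.
  rewrite bin_small ?ltnS // (_ : (n - m)%N = 0%N); last by apply/eqP; rewrite subn_eq0.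
  by rewrite !mul0r mulr0 !mul0r.
have e := mul_bin_left n m; rewrite -subnSK // in e.
have -> : (n - m = (n - m.+1).+1)%N by rewrite subnSK.
rewrite !exprS.
transitivity ((m.+1 * 'C(n, m.+1))%N%:R * a ^+ m * (1 - a) ^+ (n - m.+1) * a * (1 - a)).
  by rewrite natrM; ring.
by rewrite e natrM; ring.
Qed.

Lemma binp_le_succ n m : 0 < a < 1 ->
  m.+1%:R <= n.+1%:R * a -> binp n m <= binp n m.+1.
Proof.
move=> /andP[a0 a1] h.
have mn : (m < n)%N.
  have : m.+1%:R < n.+1%:R :> R by apply: (le_lt_trans h); rewrite gtr_pMr // ltr0n.
  by rewrite ltr_nat ltnS.
have := binp_ratio n m; rewrite natrB; last exact: ltnW.
have a01 : 0 <= a <= 1 by rewrite !ltW.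
have := binp_ge0 n m a01.
rewrite -!natr1 in h *; move: (binp n m) (binp n m.+1) => X Y X0 e.
have c0 : 0 < (m%:R + 1) * (1 - a) by rewrite mulr_gt0 // ?subr_gt0 // ltr_wpDl.
have hd : (m%:R + 1) * (1 - a) <= (n%:R - m%:R) * a by lra.
by rewrite -(ler_pM2r c0) [Y * _]mulrA e -mulrA ler_wpM2l.
Qed.

Lemma binp_succ_le n m : 0 < a < 1 ->
  n.+1%:R * a <= m.+1%:R -> binp n m.+1 <= binp n m.
Proof.
move=> /andP[a0 a1] h.
have a01 : 0 <= a <= 1 by rewrite !ltW.
have [mn|nm] := ltnP m n; last by rewrite binp_small ?ltnS // binp_ge0.
have := binp_ratio n m; rewrite natrB; last exact: ltnW.
have := binp_ge0 n m a01.
rewrite -!natr1 in h *; move: (binp n m) (binp n m.+1) => X Y X0 e.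
have c0 : 0 < (m%:R + 1) * (1 - a) by rewrite mulr_gt0 // ?subr_gt0 // ltr_wpDl.
have hd : (n%:R - m%:R) * a <= (m%:R + 1) * (1 - a) by lra.
by rewrite -(ler_pM2r c0) [Y * _]mulrA e -mulrA ler_wpM2l.
Qed.

Definition binp_jump n m := (if m is k.+1 then binp n k else 0) - binp n m.

Definition binp_tv n := \sum_(0 <= m < n.+2) `|binp_jump n m|.

Lemma binp_tv_ge0 n : 0 <= binp_tv n.
Proof. exact: sumr_ge0. Qed.

Lemma binp_tv_mode n : 0 < a < 1 ->
  binp_tv n = 2 * binp n (Num.truncn (n.+1%:R * a)).
Proof.
move=> ha; have /andP[a0 a1] := ha.
set k := Num.truncn _.
have x0 : 0 <= n.+1%:R * a by rewrite mulr_ge0 // ltW.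
have /andP[kl ku] := truncn_itv x0; rewrite -/k in kl ku.
have kn : (k <= n.+1)%N.
  rewrite ltnW // truncn_lt_nat //.
  by apply: (lt_le_trans (_ : _ < n.+1%:R)) => //; rewrite gtr_pMr // ltr0n.
rewrite /binp_tv big_nat_recl // /binp_jump sub0r normrN ger0_norm ?binp_ge0 ?ltW //.
rewrite (big_cat_nat (leq0n k) kn) /=.
have -> : \sum_(0 <= i < k) `|binp n i - binp n i.+1| =
          \sum_(0 <= i < k) (binp n i.+1 - binp n i).
  apply: eq_big_nat => i /andP[_ ik]; rewrite distrC ger0_norm // subr_ge0.
  by apply: binp_le_succ => //; apply: le_trans kl; rewrite ler_nat.
have -> : \sum_(k <= i < n.+1) `|binp n i - binp n i.+1| =
          - \sum_(k <= i < n.+1) (binp n i.+1 - binp n i).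
  rewrite -sumrN; apply: eq_big_nat => i /andP[ki _].
  rewrite opprB ger0_norm // subr_ge0.
  by apply: binp_succ_le => //; apply: (le_trans (ltW ku)); rewrite ler_nat.
by rewrite !telescope_sumr // (binp_small (ltnSn n)); ring.
Qed.

Definition binp_mass_dvd n d r := \sum_(0 <= l < n.+1) binp n l * (d %| l + r)%:R.

Lemma binp_mass_dvd_succ n d r :
  binp_mass_dvd n d r.+1 - binp_mass_dvd n d r =
  \sum_(0 <= m < n.+2) binp_jump n m * (d %| m + r)%:R.
Proof.
rewrite /binp_jump; under eq_bigr do rewrite mulrBl.
rewrite sumrB big_nat_recl // [X in _ = _ - X]big_nat_recr //= mul0r add0r.
rewrite binp_small // mul0r addr0; congr (_ - _).
by apply: eq_bigr => i _; rewrite addSnnS.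
Qed.

Lemma binp_mass_dvd_shift n d r j : (0 < d)%N -> (j <= d)%N ->
  `|binp_mass_dvd n d (r + j) - binp_mass_dvd n d r| <= binp_tv n.
Proof.
move=> d0 jd.
have -> : binp_mass_dvd n d (r + j) - binp_mass_dvd n d r =
    \sum_(0 <= i < j) (binp_mass_dvd n d (r + i).+1 - binp_mass_dvd n d (r + i)).
  have := @telescope_sumr _ 0 j (fun i => binp_mass_dvd n d (r + i)) (leq0n j).
  by rewrite /= addn0 => <-; apply: eq_bigr => i _; rewrite addnS.
under eq_bigr do rewrite binp_mass_dvd_succ.
rewrite exchange_big /=.
apply: (le_trans (ler_norm_sum _ _ _)); apply: ler_sum => m _.
rewrite -mulr_sumr normrM ler_piMr // ger0_norm ?sumr_ge0 //.
under eq_bigr do rewrite addnA.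
exact: sum_dvdn_window_le1.
Qed.

Lemma sum_binp_mass_dvd_period n d r : (0 < d)%N ->
  \sum_(0 <= j < d) binp_mass_dvd n d (r + j) = 1.
Proof.
move=> d0; rewrite /binp_mass_dvd exchange_big /= -[RHS](sum_binp n) big_mkord.
apply: eq_bigr => l _; rewrite -mulr_sumr.
under eq_bigr do rewrite addnA.
by rewrite sum_dvdn_window // mulr1.
Qed.

Lemma binp_mass_dvd_approx n d r : (0 < d)%N ->
  `|binp_mass_dvd n d r - d%:R^-1| <= binp_tv n.
Proof.
move=> d0; have dR : (d%:R : R) != 0 by rewrite pnatr_eq0 -lt0n.
have -> : binp_mass_dvd n d r - d%:R^-1 =
    d%:R^-1 * \sum_(0 <= j < d) (binp_mass_dvd n d r - binp_mass_dvd n d (r + j)).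
  rewrite sumrB sum_binp_mass_dvd_period // sumr_const_nat subn0.
  by rewrite -mulr_natr; field.
rewrite normrM ger0_norm ?invr_ge0 ?ler0n // ler_pdivrMl ?ltr0n //.
apply: (le_trans (ler_norm_sum _ _ _)).
apply: (@le_trans _ _ (\sum_(0 <= j < d) binp_tv n)).
  apply: ler_sum_nat => j /andP[_ jd].
  by rewrite distrC binp_mass_dvd_shift // ltnW.
by rewrite sumr_const_nat subn0 mulr_natl.
Qed.

Lemma sum_binp_coprime n r N : (0 < N)%N ->
  \sum_(l < n.+1) binp n l * (coprime (l + r) N)%:R =
  \sum_(d <- divisors N) (moebius d)%:~R * binp_mass_dvd n d r.
Proof.
move=> N0; under eq_bigr do rewrite (coprime_moebius _ _ N0) mulr_sumr.
rewrite exchange_big /=; apply: eq_bigr => d _.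
by rewrite /binp_mass_dvd big_mkord mulr_sumr; apply: eq_bigr => l _; rewrite mulrCA.
Qed.

Lemma binp_coprime_approx n r N : (0 < N)%N ->
  `|\sum_(l < n.+1) binp n l * (coprime (l + r) N)%:R
    - \sum_(d <- divisors N) (moebius d)%:~R / d%:R| <= (tau N)%:R * binp_tv n.
Proof.
move=> N0; rewrite sum_binp_coprime // -sumrB.
apply: (le_trans (ler_norm_sum _ _ _)).
have -> : (tau N)%:R * binp_tv n = \sum_(d <- divisors N) binp_tv n.
  by rewrite big_const_seq count_predT iter_addr addr0 mulr_natl.
rewrite big_seq [X in _ <= X]big_seq; apply: ler_sum => d.
rewrite -dvdn_divisors // => /(dvdn_gt0 N0) d0.
rewrite -mulrBr normrM -[X in _ <= X]mul1r.
by rewrite ler_pM ?moebius_norm_le1 ?binp_mass_dvd_approx ?binp_tv_ge0.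
Qed.

Definition binp_spread n := n.+1%:R * a * (1 - a).

Section Mode.

Hypothesis ha : 0 < a < 1.
Variables (n : nat).

Local Notation A := (binp_spread n).

Let A_gt0 : 0 < A.
Proof.
by case/andP: ha => a0 a1; rewrite /binp_spread !mulr_gt0 ?ltr0n ?subr_gt0.
Qed.

Lemma binp_succ_ge (t x : nat) : x.+1%:R <= n.+1%:R * a + t%:R ->
  (1 - t%:R / A) * binp n x <= binp n x.+1.
Proof.
move=> hx; have /andP[a0 a1] := ha.
have a1' : 0 < 1 - a by rewrite subr_gt0.
have e := binp_ratio n x; set X := binp n x in e *; set Y := binp n x.+1 in e *.
have X0 : 0 <= X by apply: binp_ge0; rewrite !ltW.
have Y0 : 0 <= Y by apply: binp_ge0; rewrite !ltW.
set B := A + t%:R * (1 - a).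
have B0 : 0 < B.
  have := A_gt0; have : 0 <= t%:R * (1 - a) by rewrite mulr_ge0 // ltW.
  rewrite /B; lra.
have xB : x.+1%:R * (1 - a) <= B.
  have -> : B = (n.+1%:R * a + t%:R) * (1 - a) by rewrite /B /binp_spread; ring.
  by rewrite ler_pM2r.
have Anx : A - t%:R * a <= (n - x)%:R * a.
  have -> : A - t%:R * a = (n.+1%:R - n.+1%:R * a - t%:R) * a.
    by rewrite /binp_spread; ring.
  apply: ler_wpM2r; first exact: ltW.
  apply: le_trans (natrB_le R n x).
  rewrite -!natr1 in hx *; lra.
have XY : X * (A - t%:R * a) <= Y * B.
  apply: (le_trans (ler_wpM2l X0 Anx)); rewrite mulrA -e -mulrA.
  exact: (ler_wpM2l Y0 xB).
have cB : (1 - t%:R / A) * B = A - t%:R * a - t%:R ^+ 2 * (1 - a) / A.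
  by rewrite /B; field; rewrite gt_eqF.
rewrite -(ler_pM2r B0) mulrAC cB mulrC; apply: le_trans XY; apply: (ler_wpM2l X0).
by rewrite lerBlDr lerDl divr_ge0 ?(ltW A_gt0) // mulr_ge0 ?sqr_ge0 // ltW.
Qed.

Lemma binp_geometric_lb (k t i : nat) : k%:R <= n.+1%:R * a -> t%:R <= A ->
  (i <= t)%N -> (1 - i%:R * t%:R / A) * binp n k <= binp n (k + i).
Proof.
move=> hk tA; elim: i => [|i IH] it; first by rewrite addn0 !mul0r subr0 mul1r.
have c0 : 0 <= 1 - t%:R / A by rewrite subr_ge0 ler_pdivrMr // mul1r.
have hx : (k + i).+1%:R <= n.+1%:R * a + t%:R by rewrite -addnS natrD lerD // ler_nat.
rewrite addnS; apply: le_trans (binp_succ_ge hx).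
apply: (@le_trans _ _ ((1 - t%:R / A) * ((1 - i%:R * t%:R / A) * binp n k))).
  rewrite [X in _ <= X]mulrA; apply: ler_wpM2r; first by case/andP: ha => *; rewrite binp_ge0 ?ltW.
  rewrite -subr_ge0.
  have -> : (1 - t%:R / A) * (1 - i%:R * t%:R / A) - (1 - i.+1%:R * t%:R / A) =
            i%:R * t%:R ^+ 2 / A ^+ 2 by rewrite -natr1; field; rewrite gt_eqF.
  by rewrite divr_ge0 ?sqr_ge0 // mulr_ge0 ?sqr_ge0.
by rewrite ler_wpM2l // IH // ltnW.
Qed.

Lemma binp_plateau (k t i : nat) : k%:R <= n.+1%:R * a -> t%:R ^+ 2 <= A / 2 ->
  (i <= t)%N -> binp n k / 2 <= binp n (k + i).
Proof.
move=> hk tt it; have P0 : 0 <= binp n k by case/andP: ha => *; rewrite binp_ge0 ?ltW.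
have tt2 : t%:R <= t%:R ^+ 2 :> R.
  have [->|tp] := posnP t; first by rewrite expr2 mul0r.
  by rewrite expr2 ler_peMl // ler1n.
have tA : t%:R <= A by have := A_gt0; lra.
apply: le_trans (binp_geometric_lb hk tA it).
have itt : i%:R * t%:R <= A / 2.
  by apply: le_trans tt; rewrite expr2 ler_wpM2r // ler_nat.
have itA : i%:R * t%:R / A <= 1 / 2 by rewrite ler_pdivrMr //; lra.
have : 0 <= (1 / 2 - i%:R * t%:R / A) * binp n k by rewrite mulr_ge0 // subr_ge0.
lra.
Qed.

Lemma binp_mode_sq_le (k : nat) : k%:R <= n.+1%:R * a ->
  binp n k ^+ 2 * (n%:R * (a * (1 - a))) <= 8.
Proof.
move=> hk; have /andP[a0 a1] := ha.
have P0 : 0 <= binp n k by rewrite binp_ge0 ?ltW.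
(* t = floor (sqrt (A/2)) makes the plateau both flat (t^2 <= A/2) and long
   ((t+1)^2 >= A/2). *)
set s := Num.sqrt (A / 2).
have s0 : 0 <= s by apply: sqrtr_ge0.
have ss : s ^+ 2 = A / 2 by rewrite sqr_sqrtr // divr_ge0 // ltW.
set t := Num.truncn s.
have /andP[tl tu] := truncn_itv s0; rewrite -/t in tl tu.
have tt : t%:R ^+ 2 <= A / 2 by rewrite -ss !expr2 ler_pM.
have s2 : A / 2 <= t.+1%:R ^+ 2 by rewrite -ss !expr2 ler_pM // ltW.
have window : t.+1%:R * (binp n k / 2) <= 1.
  have a01 : 0 <= a <= 1 by rewrite !ltW.
  apply: le_trans (sum_binp_window_le1 n k t.+1 a01).
  have -> : t.+1%:R * (binp n k / 2) = \sum_(0 <= i < t.+1) (binp n k / 2).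
    by rewrite sumr_const_nat subn0 mulr_natl.
  by apply: ler_sum_nat => i /andP[_ it]; apply: (binp_plateau hk tt).
have nA : n%:R * (a * (1 - a)) <= A.
  rewrite /binp_spread -natr1 mulrA -subr_ge0.
  have -> : (n%:R + 1) * a * (1 - a) - n%:R * a * (1 - a) = a * (1 - a) by ring.
  by rewrite mulr_ge0 ?subr_ge0 ?ltW.
have Pt0 : 0 <= binp n k * t.+1%:R by rewrite mulr_ge0.
have Pt2 : (binp n k * t.+1%:R) ^+ 2 <= 4.
  rewrite expr2 (_ : 4 = 2 * 2); last by rewrite -natrM.
  by apply: ler_pM => //; lra.
apply: (@le_trans _ _ (binp n k ^+ 2 * (2 * t.+1%:R ^+ 2))).
  by rewrite ler_wpM2l ?sqr_ge0 //; lra.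
rewrite mulrCA -exprMn; lra.
Qed.

Lemma binp_tv_sq_le : binp_tv n ^+ 2 * (n%:R * (a * (1 - a))) <= 32.
Proof.
have /andP[a0 _] := ha.
set k := Num.truncn (n.+1%:R * a).
have hk : k%:R <= n.+1%:R * a by rewrite truncn_le mulr_ge0 // ltW.
rewrite binp_tv_mode // -/k exprMn -mulrA (_ : 32 = 2 ^+ 2 * 8); last first.
  by rewrite expr2 -!natrM.
by rewrite ler_wpM2l ?sqr_ge0 // binp_mode_sq_le.
Qed.

End Mode.

End BinomialDistribution.

Lemma ler_add1_of_sqr_le (R : realFieldType) (x D : R) :
  x ^+ 2 <= D -> x <= D + 1.
Proof.
move=> xD; have [x1|x1] := lerP x 1; first by have := sqr_ge0 x; lra.
have : x <= x ^+ 2 by rewrite expr2 ler_peMl; lra.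
lra.
Qed.

Theorem lemma2 (R : realType) (alpha : R) (halpha : 0 < alpha <= 1 / 2) :
  exists C : R, 0 < C /\
    forall n a b : nat, (1 <= n)%N ->
      `| \sum_(l < n.+1)
            'C(n, l)%:R * alpha ^+ l * (1 - alpha) ^+ (n - l)
              * (coprime (l + a) (n + b))%:R
         - \sum_(d <- divisors (n + b)) (moebius d)%:~R / d%:R |
      <= C * ((tau (n + b))%:R / Num.sqrt n%:R).
Proof.
have /andP[a0 ah] := halpha; have ha : 0 < alpha < 1 by rewrite a0 /=; lra.
have v0 : 0 < alpha * (1 - alpha) by rewrite mulr_gt0 // subr_gt0; lra.
set D := 32 / (alpha * (1 - alpha)); have D0 : 0 < D by rewrite divr_gt0.
exists (D + 1); split=> [|n a b n1]; first lra.
set N := (n + b)%N; have N0 : (0 < N)%N by rewrite addn_gt0 n1.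
have sn0 : 0 < Num.sqrt (n%:R : R) by rewrite sqrtr_gt0 ltr0n.
apply: (le_trans (binp_coprime_approx alpha n a N0)).
rewrite mulrCA ler_wpM2l // ler_pdivlMr //; apply: ler_add1_of_sqr_le.
by rewrite exprMn sqr_sqrtr ?ler0n // ler_pdivlMr // -mulrA binp_tv_sq_le.
Qed.
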